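(* Let $\mathcal{C}$ be a finite or countable alphabet with letter probabilities $(p_\alpha)_{\alpha\in\mathcal{C}}$, $0<p_\alpha<1$, $\sum_\alpha p_\alpha=1$, and let $\mathbb{P}$ be the product measure on $\mathcal{C}^{\mathbb{N}}$ with these identically distributed marginals. View each $S_n$ as a random variable on $\mathcal{C}^{\mathbb{N}}$ via $S_n(x)=S_n(x_1^n)$. Then there is no random variable $S$ on $\mathcal{C}^{\mathbb{N}}$ such that $S_n$ converges in probability to $S$.
   Context: $x_a^b=(x_a,\dots,x_b)$. The first return is $T_n(x_1^n)=\min\{j\ge1: x_1^{n-j}=x_{j+1}^n\}$ ($T_n=n$ if the set is empty), and $S_n=n-T_n$. *)

From HB Require Import structures.
From mathcomp Require Import all_boot all_order all_algebra.
From mathcomp Require Import all_classical all_reals all_analysis.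
Set Implicit Arguments. Unset Strict Implicit. Unset Printing Implicit Defensive.
Import Order.TTheory GRing.Theory Num.Theory.

Local Open Scope classical_set_scope.

(* Sequences x = (x_1, x_2, ...) in C^N are represented as x : nat -> C,
   with the paper's x_k stored at x (k-1). *)

Definition cyl (C : Type) (n : nat) (a : nat -> C) : set (nat -> C) :=
  [set x | forall i, (i < n)%N -> x i = a i].

Definition cylinders (C : Type) : set (set (nat -> C)) :=
  [set A | exists n a, A = cyl n a].

(* C^N with the product sigma-algebra (generated by the cylinders) *)
Definition seqspace (C : pointedType) := g_sigma_algebraType (@cylinders C).

Definition is_period (C : eqType) (n : nat) (x : nat -> C) (j : nat) : bool :=
  all (fun i => x i == x (i + j)) (iota 0 (n - j)).

Definition Tret (C : eqType) (n : nat) (x : nat -> C) : nat :=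
  head n [seq j <- iota 1 n | is_period n x j].

Definition Sret (C : eqType) (n : nat) (x : nat -> C) : nat := n - Tret n x.

From HB Require Import structures.
From mathcomp Require Import all_boot all_order all_algebra.
From mathcomp Require Import all_classical all_reals all_analysis.
From mathcomp Require Import zify measurable_realfun ring lra.
Set Implicit Arguments. Unset Strict Implicit. Unset Printing Implicit Defensive.
Import Order.TTheory GRing.Theory Num.Theory.
Local Open Scope classical_set_scope.

(* If S_n converged in probability, then for large k both S_(k+2) and S_(k+3)
   would lie within 1/2 of the limit with high probability, hence coincide.
   They differ on the event x_1 = x_(k+2) = a <> x_(k+3): there k+1 is a period
   of x_1^(k+2), so S_(k+2) >= 1, and a common value s >= 1 would force
   x_s = x_(k+2) and x_s = x_(k+3). The event has probability p_a^2 (1 - p_a)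
   whatever k is, which follows from the cylinder formula by summing over the
   intermediate letters with countable additivity. *)

Lemma head_filter_iota_le (P : pred nat) d j len lo :
  (lo <= j < lo + len)%N -> P j -> (head d [seq k <- iota lo len | P k] <= j)%N.
Proof.
elim: len lo => [|len IH] lo; first by rewrite addn0; lia.
move=> /andP[lo_j j_lt] Pj /=; case: ifP => //= Plo.
apply: IH => //; rewrite addSnnS j_lt andbT ltn_neqAle lo_j andbT.
by apply: contraFneq Plo => ->.
Qed.

Section first_return.
Variable C : eqType.
Implicit Types (n : nat) (x y : nat -> C).

Lemma Tret_le_period n x j : (0 < j <= n)%N -> is_period n x j -> (Tret n x <= j)%N.
Proof. by move=> /andP[j_gt0 j_le] Pj; apply: head_filter_iota_le; lia. Qed.

Lemma is_period_Tret n x : (Tret n x < n)%N -> is_period n x (Tret n x).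
Proof.
rewrite /Tret; case E: [seq j <- iota 1 n | is_period n x j] => [|t s] /=.
  by rewrite ltnn.
have : t \in [seq j <- iota 1 n | is_period n x j] by rewrite E mem_head.
by rewrite mem_filter => /andP[].
Qed.

Lemma eq_Sret n x y : (forall i, (i < n)%N -> x i = y i) -> Sret n x = Sret n y.
Proof.
move=> xy; rewrite /Sret /Tret; congr (_ - head _ _)%N; apply: eq_filter => j.
apply: eq_in_all => i; rewrite mem_iota add0n => /andP[_ hi].
by rewrite !xy //; lia.
Qed.

Lemma Sret_gt0 n x : (1 < n)%N -> x 0%N = x n.-1 -> (0 < Sret n x)%N.
Proof.
move=> n_gt1 x0n; rewrite /Sret subn_gt0; suff : (Tret n x <= n.-1)%N by lia.
apply: Tret_le_period; first lia.
rewrite /is_period (_ : n - n.-1 = 1)%N; last lia.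
by rewrite /= andbT x0n.
Qed.

Lemma Sret_last n x : (0 < Sret n x)%N -> x (Sret n x).-1 = x n.-1.
Proof.
rewrite /Sret subn_gt0 => T_lt.
move/allP: (is_period_Tret T_lt) => /(_ (n - Tret n x).-1).
rewrite mem_iota add0n prednK ?subn_gt0 // leqnn => /(_ isT) /eqP ->.
by congr x; lia.
Qed.

Lemma Sret_succ_neq n x : (0 < n)%N -> x 0%N = x n -> x n != x n.+1 ->
  Sret n.+1 x != Sret n.+2 x.
Proof.
move=> n_gt0 x0n; apply: contraNneq => S_eq.
have S_gt0 : (0 < Sret n.+1 x)%N by apply: Sret_gt0.
have last_n := Sret_last S_gt0; rewrite S_eq in S_gt0.
by rewrite -last_n -(Sret_last S_gt0) S_eq.
Qed.
End first_return.

Definition depends_on_prefix (C : Type) (n : nat) (Q : set (nat -> C)) :=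
  forall x y, (forall i, (i < n)%N -> x i = y i) -> Q x -> Q y.

Definition update (C : Type) (a : nat -> C) (m : nat) (c : C) : nat -> C :=
  fun i => if i == m then c else a i.

Section cylinders.
Variable C : Type.
Implicit Types (m n : nat) (a : nat -> C) (Q : set (nat -> C)).

Lemma depends_on_prefixW m n Q : (m <= n)%N ->
  depends_on_prefix m Q -> depends_on_prefix n Q.
Proof. by move=> mn Qm x y xy; apply: Qm => i i_lt; apply: xy; apply: leq_trans mn. Qed.

Lemma depends_on_prefixI n Q Q' : depends_on_prefix n Q -> depends_on_prefix n Q' ->
  depends_on_prefix n (Q `&` Q').
Proof. by move=> Qn Q'n x y xy [/(Qn _ _ xy) ? /(Q'n _ _ xy)]. Qed.

Lemma coord_depends_on_prefix i c : depends_on_prefix i.+1 [set x : nat -> C | x i = c].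
Proof. by move=> x y xy /=; rewrite xy. Qed.

Lemma cyl0 a : cyl 0 a = setT.
Proof. by apply/seteqP; split. Qed.

Lemma cyl_update m a c : cyl m.+1 (update a m c) = cyl m a `&` [set x | x m = c].
Proof.
apply/seteqP; split => x /=.
  move=> xa; split; last by rewrite xa // /update eqxx.
  by move=> i i_lt; rewrite xa 1?ltnW // /update ltn_eqF.
move=> [xa xm] i; rewrite ltnS leq_eqVlt /update.
by case: eqP => [->|_ /= /xa].
Qed.

Lemma cyl_setI_bigcup m a Q :
  cyl m a `&` Q = \bigcup_c (cyl m.+1 (update a m c) `&` Q).
Proof.
apply/seteqP; split => [x [xa Qx]|x [c _ []]]; last by rewrite cyl_update => -[].
by exists (x m) => //; rewrite cyl_update.
Qed.

Lemma trivIset_cyl_update m a (G : C -> set (nat -> C)) :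
  trivIset setT (fun c => cyl m.+1 (update a m c) `&` G c).
Proof.
by move=> c c' _ _ [x [[+ _] [+ _]]]; rewrite !cyl_update => -[_ <-] [_ ->].
Qed.

Lemma cyl_setI_prefix m a Q : depends_on_prefix m Q ->
  cyl m a `&` Q = cyl m a \/ cyl m a `&` Q = set0.
Proof.
move=> Qm; have [Qa|nQa] := pselect (Q a); [left|right]; apply/seteqP; split.
- by move=> x [].
- by move=> x xa; split => //; apply: Qm Qa => i /xa.
- by move=> x [xa Qx]; apply: nQa; apply: Qm Qx => i /xa.
- by [].
Qed.

End cylinders.

Section prefix_measurable.
Variable C : pointedType.
Hypothesis C_countable : countable [set: C].
Implicit Types (m n : nat) (a : nat -> C) (Q : set (nat -> C)).

Lemma cyl_measurable m a : measurable (cyl m a : set (seqspace C)).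
Proof. by apply: sub_sigma_algebra; exists m, a. Qed.

Lemma cyl_setI_measurable n m a Q : depends_on_prefix (m + n) Q ->
  measurable (cyl m a `&` Q : set (seqspace C)).
Proof.
elim: n m a => [|n IH] m a; rewrite ?addn0 => Qmn.
  by case: (cyl_setI_prefix a Qmn) => ->; [exact: cyl_measurable|exact: measurable0].
rewrite cyl_setI_bigcup; apply: countable_bigcupT_measurable => // c.
by apply: IH; rewrite addSnnS.
Qed.

Lemma prefix_measurable n Q : depends_on_prefix n Q ->
  measurable (Q : set (seqspace C)).
Proof.
move=> Qn; rewrite -(setTI Q) -(cyl0 (fun=> point)).
exact: (@cyl_setI_measurable n 0).
Qed.

Lemma coord_measurable i c : measurable ([set x | x i = c] : set (seqspace C)).
Proof. exact: prefix_measurable (@coord_depends_on_prefix _ i c). Qed.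

End prefix_measurable.

Local Open Scope ring_scope.

Lemma measure_bigcup_scale d (T : measurableType d) (R : realType)
    (mu : {measure set T -> \bar R}) (U : pointedType) (G H : U -> set T) (k : R) :
  countable [set: U] ->
  (forall i, measurable (G i)) -> (forall i, measurable (H i)) ->
  trivIset setT G -> trivIset setT H ->
  (forall i, mu (G i) = (k%:E * mu (H i))%E) ->
  mu (\bigcup_i G i) = (k%:E * mu (\bigcup_i H i))%E.
Proof.
move=> /countable_injP[f /(_ _ _ (in_setT _) (in_setT _)) f_inj] mG mH tG tH GH.
pose g n := xget point [set i | f i = n].
have gK i : g (f i) = i.
  by apply: f_inj; have := @xgetPex U point [set j | f j = f i] (ex_intro _ i erefl).
have reindex (F : U -> set T) : \bigcup_i F i = \bigcup_(n in range f) F (g n).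
  apply/seteqP; split => [x [i _ Fx]|x [_ [i _ <-]]]; last by rewrite gK; exists i.
  by exists (f i); [exists i|rewrite gK].
have measure_bigcup_range (F : U -> set T) : (forall i, measurable (F i)) ->
    trivIset setT F ->
    mu (\bigcup_i F i) = (\sum_(n <oo | n \in range f) mu (F (g n)))%E.
  move=> mF tF; rewrite reindex measure_bigcup //.
  by move=> _ _ [i _ <-] [j _ <-]; rewrite !gK => /tF ->.
rewrite !measure_bigcup_range // -nneseriesZl //.
by apply: eq_eseriesr => n _; rewrite GH.
Qed.

Section product_measure.
Variables (R : realType) (C : pointedType).
Hypothesis C_countable : countable [set: C].
Variables (p : C -> R) (P : probability (seqspace C) R).
Hypothesis P_cyl : forall n a, P (cyl n a : set (seqspace C)) = (\prod_(i < n) p (a i))%:E.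
Implicit Types (m n : nat) (a : nat -> C) (Q : set (nat -> C)).

Lemma measure_cyl_update m a c :
  P (cyl m.+1 (update a m c) : set (seqspace C)) = ((p c)%:E * P (cyl m a))%E.
Proof.
rewrite !P_cyl big_ord_recr /= /update eqxx mulrC EFinM; congr (_ * _%:E)%E.
by apply: eq_bigr => i _; rewrite ltn_eqF.
Qed.

Lemma measure_cyl_setI_coord n m a Q c : depends_on_prefix (m + n) Q ->
  P (cyl m a `&` Q `&` [set x | x (m + n)%N = c] : set (seqspace C)) =
  ((p c)%:E * P (cyl m a `&` Q : set (seqspace C)))%E.
Proof.
elim: n m a Q => [|n IH] m a Q; rewrite ?addn0 => Qmn.
  case: (cyl_setI_prefix a Qmn) => ->; last by rewrite set0I !measure0 mule0.
  by rewrite -cyl_update measure_cyl_update.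
rewrite -addSnnS -setIA !cyl_setI_bigcup.
apply: measure_bigcup_scale => //; try exact: trivIset_cyl_update.
- move=> c'; apply: (@cyl_setI_measurable _ C_countable n.+1).
  rewrite addnS; apply: depends_on_prefixI; last exact: coord_depends_on_prefix.
  by apply: depends_on_prefixW Qmn; rewrite addSnnS.
- by move=> c'; apply: (@cyl_setI_measurable _ C_countable n); rewrite addSnnS.
- by move=> c'; rewrite setIA; apply: IH; rewrite addSnnS.
Qed.

Lemma measure_setI_coord n Q c : depends_on_prefix n Q ->
  P (Q `&` [set x | x n = c] : set (seqspace C)) = ((p c)%:E * P (Q : set (seqspace C)))%E.
Proof.
move=> Qn; have := @measure_cyl_setI_coord n 0 (fun=> point) Q c Qn.
by rewrite cyl0 !setTI.
Qed.

Lemma measure_repeat_then_change k c :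
  P ([set x | x 0%N = c] `&` [set x | x k.+1 = c] `\` [set x | x k.+2 = c]
    : set (seqspace C)) = (p c ^+ 2 * (1 - p c))%:E.
Proof.
pose coord i : set (seqspace C) := [set x | x i = c].
have coord_dep i : depends_on_prefix i.+1 (coord i) by exact: coord_depends_on_prefix.
have dep_k2 : depends_on_prefix k.+2 (coord 0%N `&` coord k.+1).
  by apply: depends_on_prefixI (coord_dep _); apply: depends_on_prefixW (coord_dep _).
have m0k : measurable (coord 0%N `&` coord k.+1) := prefix_measurable C_countable dep_k2.
have P0 : P (coord 0%N) = (p c)%:E.
  have := @measure_setI_coord 0 setT c (fun _ _ _ _ => I).
  by rewrite setTI probability_setT mule1.
have P0k : P (coord 0%N `&` coord k.+1) = (p c ^+ 2)%:E.
  rewrite measure_setI_coord ?P0 -?EFinM ?expr2 //.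
  by apply: depends_on_prefixW (coord_dep _).
have P0kk : P (coord 0%N `&` coord k.+1 `&` coord k.+2) = (p c ^+ 3)%:E.
  by rewrite measure_setI_coord // P0k -EFinM exprS.
rewrite measureD; first last.
- exact: le_lt_trans (probability_le1 P m0k) (ltry _).
- exact: coord_measurable.
- exact: m0k.
transitivity ((p c ^+ 2)%:E - (p c ^+ 3)%:E)%E; first by congr (_ - _)%E.
by rewrite -EFinB; congr (_%:E); ring.
Qed.

End product_measure.

Lemma Sret_measurable (R : realType) (C : pointedType) (n : nat) :
  countable [set: C] ->
  measurable_fun [set: seqspace C] (fun x => (Sret n x)%:R : R).
Proof.
move=> C_countable _ B _; rewrite setTI; apply: (prefix_measurable C_countable (n := n)).
by move=> x y xy; rewrite /preimage /= (eq_Sret xy).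
Qed.

Lemma measurable_Sret_dev (R : realType) (C : pointedType) (S : seqspace C -> R)
    (eps : R) (n : nat) :
  countable [set: C] -> measurable_fun [set: seqspace C] S ->
  measurable [set x : seqspace C | eps <= `|(Sret n x)%:R - S x|].
Proof.
move=> C_countable mS; rewrite -preimage_itvcy -[X in measurable X]setTI.
apply: (measurableT_comp (@normr_measurable R setT)) => //.
by apply: measurable_funB mS; exact: Sret_measurable.
Qed.

Lemma natr_eq_close (R : realFieldType) (u v : nat) (s : R) :
  `|u%:R - s| < 1/2 -> `|v%:R - s| < 1/2 -> u = v.
Proof.
rewrite !ltr_norml => /andP[u_lo u_hi] /andP[v_lo v_hi].
have [uv|vu|//] := ltngtP u v.
  have : u.+1%:R <= v%:R :> R by rewrite ler_nat.
  by rewrite -addn1 natrD => ?; exfalso; lra.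
have : v.+1%:R <= u%:R :> R by rewrite ler_nat.
by rewrite -addn1 natrD => ?; exfalso; lra.
Qed.

Lemma Sret_far_after_change (R : realFieldType) (C : eqType) k (x : nat -> C) (s : R) :
  x 0%N = x k.+1 -> x k.+1 != x k.+2 ->
  1/2 <= `|(Sret k.+2 x)%:R - s| \/ 1/2 <= `|(Sret k.+3 x)%:R - s|.
Proof.
move=> x0k xk; apply: contrapT => /not_orP[/negP + /negP]; rewrite -!ltNge => near2 near3.
by move/eqP: (Sret_succ_neq (ltn0Sn k) x0k xk); apply; exact: natr_eq_close near2 near3.
Qed.

Theorem proposition3 (R : realType) (C : pointedType)
  (hC : countable [set: C])
  (p : C -> R) (p_gt0 : forall a, 0 < p a) (p_lt1 : forall a, p a < 1)
  (p_sum : (\esum_(a in [set: C]) (p a)%:E = 1)%E)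
  (P : probability (seqspace C) R)
  (P_cyl : forall (n : nat) (a : nat -> C),
      P (cyl n a : set (seqspace C)) = (\prod_(i < n) p (a i))%:E) :
  ~ exists S : seqspace C -> R,
      measurable_fun [set: seqspace C] S /\
      forall eps : R, 0 < eps ->
        P [set x : seqspace C | eps <= `|(Sret n x)%:R - S x| ]
          @[n --> \oo] --> 0%E.
Proof.
move=> [S [mS S_cvg]].
pose A n := [set x : seqspace C | 1/2 <= `|(Sret n x)%:R - S x|].
have mA n : measurable (A n) by exact: measurable_Sret_dev.
pose a : C := point; pose d := p a ^+ 2 * (1 - p a).
have d2_gt0 : (0 < (d / 2)%:E)%E.
  by rewrite lte_fin divr_gt0 // mulr_gt0 ?exprn_gt0 ?subr_gt0.
have [k _ A_small] := S_cvg (1/2) ltac:(lra) _ (open_ereal_lt' d2_gt0).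
pose J : set (seqspace C) :=
  [set x | x 0%N = a] `&` [set x | x k.+1 = a] `\` [set x | x k.+2 = a].
have J_sub : J `<=` A k.+2 `|` A k.+3.
  move=> x [[/= x0 xk] /eqP xk2]; apply: Sret_far_after_change; first by rewrite x0 xk.
  by rewrite xk eq_sym.
have mJ : measurable J.
  by apply: measurableD; [apply: measurableI|]; exact: coord_measurable.
have : (P J < (d / 2)%:E + (d / 2)%:E)%E.
  apply: le_lt_trans (le_measure _ _ _ J_sub) _; rewrite ?inE //.
  - exact: measurableU (mA _) (mA _).
  apply: le_lt_trans (measureU2 _ (mA _) (mA _)) _.
  by apply: lteD; apply: A_small => /=; lia.
by rewrite /J (measure_repeat_then_change hC P_cyl) -/d -EFinD lte_fin; lra.
Qed.
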